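(* Under the standing assumptions below, the family $\mathcal U=\{I(\mathcal P):\mathcal P \text{ a finite partition of } \lambda\}$ is an ultrafilter on $\lambda$.
   Context: Standing assumptions: $G$ is a finite graph with at least one edge which is trivially power-colorable (for every positive integer $n$, every $\chi(G)$-coloring of $G^n$ is of the form $v\mapsto\phi(v_i)$ for some coordinate $i$ and proper coloring $\phi$ of $G$), $k=\chi(G)$, $\lambda$ is an infinite cardinal, and $\Phi$ is a fixed proper $k$-coloring of $G^\lambda$ (vertex set $V(G)^\lambda$, $(v_\xi)$ adjacent to $(w_\xi)$ iff $v_\xi w_\xi\in E(G)$ for all $\xi<\lambda$). A finite partition of $\lambda$ is a partition of $\lambda$ into finitely many nonempty pieces. For a finite partition $\mathcal P$, $V_{\mathcal P}=\{\mathbf v\in V(G^\lambda): \mathbf v\restriction A \text{ is constant for each } A\in\mathcal P\}$, and for $\mathbf v\in V_{\mathcal P}$, $A\in\mathcal P$, $\mathbf v_A$ is the constant value of $\mathbf v$ on $A$. If $\mathcal P=\{A_1,\dots,A_n\}$, the induced subgraph on $V_{\mathcal P}$ is isomorphic to $G^n$ via $\mathbf v\mapsto(\mathbf v_{A_1},\dots,\mathbf v_{A_n})$, so there are $i$ and a proper coloring $\phi$ of $G$ with $\Phi(\mathbf v)=\phi(\mathbf v_{A_i})$ for all $\mathbf v\in V_{\mathcal P}$; since $G$ has an edge, $A_i$ is uniquely determined and is denoted $I(\mathcal P)$. *)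

From HB Require Import structures.
From mathcomp Require Import all_boot.
From mathcomp Require Import boolp classical_sets cardinality filter.

Set Implicit Arguments.
Unset Strict Implicit.
Unset Printing Implicit Defensive.

Local Open Scope classical_set_scope.

Definition simple_graph (T : finType) (e : rel T) : Prop :=
  symmetric e /\ irreflexive e.

Definition proper_coloring (V C : Type) (adj : V -> V -> Prop) (c : V -> C) :=
  forall v w, adj v w -> c v <> c w.

(* Adjacency of the n-th categorical (tensor) power G^n on {ffun 'I_n -> T}. *)
Definition power_adj (T : finType) (e : rel T) (n : nat)
  (v w : {ffun 'I_n -> T}) : Prop := forall i, e (v i) (w i).

Definition bigpower_adj (T : finType) (e : rel T) (L : Type)
  (v w : L -> T) : Prop := forall x, e (v x) (w x).

Definition is_chromatic_number (T : finType) (e : rel T) (k : nat) : Prop :=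
  (exists c : T -> 'I_k, proper_coloring (fun x y => e x y) c) /\
  (forall m, (exists c : T -> 'I_m, proper_coloring (fun x y => e x y) c) ->
     (k <= m)%N).

(* Trivially power-colorable (with k = chi(G)): for every positive n, every
   proper k-coloring of G^n is v |-> phi (v i) for a coordinate i and a
   proper coloring phi of G. *)
Definition trivially_power_colorable (T : finType) (e : rel T) (k : nat) :=
  forall n : nat, (0 < n)%N ->
  forall c : {ffun 'I_n -> T} -> 'I_k,
    proper_coloring (@power_adj T e n) c ->
    exists (i : 'I_n) (phi : T -> 'I_k),
      proper_coloring (fun x y => e x y) phi /\ forall v, c v = phi (v i).

(* A finite partition of L into n nonempty pieces, given by a surjective
   labelling p : L -> 'I_n; the pieces are the fibres p^-1(j). *)
Definition finite_partition (L : Type) (n : nat) (p : L -> 'I_n) : Prop :=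
  forall j : 'I_n, exists x, p x = j.

Definition in_VP (L T : Type) (n : nat) (p : L -> 'I_n) (v : L -> T) : Prop :=
  forall x y, p x = p y -> v x = v y.

(* [is_I Phi p A] : A is the piece I(P) of the partition P given by p,
   i.e. A = p^-1(i) for an index i such that, for some proper coloring phi
   of G, Phi v = phi (v_{A}) for all v in V_P (v_A = v x for any x in A). *)
Definition is_I (T : finType) (e : rel T) (k : nat) (L : Type)
  (Phi : (L -> T) -> 'I_k) (n : nat) (p : L -> 'I_n) (A : set L) : Prop :=
  exists (i : 'I_n) (phi : T -> 'I_k),
    A = [set x | p x = i] /\
    proper_coloring (fun x y => e x y) phi /\
    forall v : L -> T, in_VP p v -> forall x, p x = i -> Phi v = phi (v x).

Definition U_family (T : finType) (e : rel T) (k : nat) (L : Type)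
  (Phi : (L -> T) -> 'I_k) : set_system L :=
  [set A | exists (n : nat) (p : L -> 'I_n),
             finite_partition p /\ is_I e Phi p A].

From HB Require Import structures.
From mathcomp Require Import all_boot.
From mathcomp Require Import boolp classical_sets cardinality filter.

(* Fix a proper k-coloring Phi of G^L.  A "labelling" of L is a
   map f : L -> X into a finite type; its fibres form a finite partition, and
   the vertices constant on the fibres form a copy of G^#|X|.  Trivial
   power-colorability yields a point x0 such that, on these vertices, Phi is
   read off the coordinate x0 through a proper coloring of G; we say that f is
   represented at x0.  Two facts drive everything:
   - coarsening: if f is represented at x0, so is every coarser labelling;
   - uniqueness: two points representing f lie in the same fibre (a vertex
     taking an edge {a,b} across the two fibres would get two colors).
   Hence the distinguished fibres form the family U, and a set A that is a
   union of fibres of f belongs to U exactly when it contains a point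
   representing f.  Applying this to the labellings by the indicators of one
   or two sets gives the filter axioms and "A or its complement is in U",
   i.e. U is an ultrafilter. *)

Set Implicit Arguments.
Unset Strict Implicit.
Unset Printing Implicit Defensive.
Local Open Scope classical_set_scope.

Lemma ultra_setVsetC (L : Type) (F : set_system L) :
  ProperFilter F -> (forall A, F A \/ F (~` A)) -> UltraFilter F.
Proof.
move=> PF FVC; split => // G PG sFG.
apply/funext => A; apply/propext; split => [GA|]; last exact: sFG.
have [//|FnA] := FVC A.
exfalso; apply: (filter_not_empty G).
by rewrite -(setICr A); apply: filterI => //; exact: sFG.
Qed.

Section Labellings.

Variable L : Type.

Definition fibre (X : Type) (f : L -> X) (x0 : L) : set L :=
  [set x | f x = f x0].

Definition saturated (X : Type) (f : L -> X) (A : set L) : Prop :=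
  forall x y, f x = f y -> A x -> A y.

Definition refines (X Y : Type) (f : L -> X) (g : L -> Y) : Prop :=
  forall x y, f x = f y -> g x = g y.

Definition indicator (A : set L) : L -> bool := fun x => `[< A x >].

Lemma fibre_saturated (X : Type) (f : L -> X) (x0 : L) :
  saturated f (fibre f x0).
Proof. by move=> x y fxy; rewrite /fibre /= fxy. Qed.

Lemma saturatedC (X : Type) (f : L -> X) (A : set L) :
  saturated f A -> saturated f (~` A).
Proof. by move=> sA x y fxy nAx Ay; apply/nAx/(sA y x). Qed.

Lemma saturatedI (X : Type) (f : L -> X) (A B : set L) :
  saturated f A -> saturated f B -> saturated f (A `&` B).
Proof. by move=> sA sB x y fxy [Ax Bx]; split; [exact: sA Ax|exact: sB Bx]. Qed.

Lemma saturated_refines (X Y : Type) (f : L -> X) (g : L -> Y) (A : set L) :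
  refines f g -> saturated g A -> saturated f A.
Proof. by move=> fg sA x y /fg; exact: sA. Qed.

Lemma indicator_saturated (A : set L) : saturated (indicator A) A.
Proof.
move=> x y Axy Ax; have : indicator A y by rewrite -Axy; exact/asboolP.
by move/asboolP.
Qed.

Lemma refines_indicator (X : Type) (f : L -> X) (A : set L) :
  saturated f A -> refines f (indicator A).
Proof.
move=> sA x y fxy; apply: asbool_equiv_eq.
by split; apply: sA.
Qed.

Lemma fibre_indicator (A : set L) (x0 : L) : A x0 -> fibre (indicator A) x0 = A.
Proof.
move=> Ax0; apply/funext => x; apply/propext; rewrite /fibre /indicator /=.
by rewrite (asboolT Ax0); split => /asboolP.
Qed.

Lemma finite_partition_of_labelling (X : finType) (f : L -> X) (x0 : L) :
  exists n (p : L -> 'I_n),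
    finite_partition p /\ forall x y, p x = p y <-> f x = f y.
Proof.
pose S : {set X} := finset (fun y => `[< exists x, f x = y >]).
have Sf x : f x \in S by rewrite inE; apply/asboolP; exists x.
pose p x := enum_rank_in (Sf x0) (f x).
exists #|S|, p; split.
  move=> j; have := enum_valP j; rewrite inE => /asboolP [x fx].
  by exists x; rewrite /p fx enum_valK_in.
move=> x y; split => [pxy|fxy]; last by rewrite /p fxy.
rewrite -(enum_rankK_in (Sf x0) (Sf x)) -(enum_rankK_in (Sf x0) (Sf y)).
by rewrite -/(p x) -/(p y) pxy.
Qed.

End Labellings.

Section Representation.

Variables (T : finType) (e : rel T) (k : nat) (L : Type).
Variable Phi : (L -> T) -> 'I_k.
Variables (a b : T).
Hypothesis eab : e a b.
Hypothesis Phi_proper : proper_coloring (@bigpower_adj T e L) Phi.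

Definition fibrewise_constant (X : Type) (f : L -> X) (v : L -> T) : Prop :=
  forall x y, f x = f y -> v x = v y.

Definition represents (X : Type) (f : L -> X) (x0 : L) : Prop :=
  exists phi : T -> 'I_k, proper_coloring (fun x y => e x y) phi /\
    forall v, fibrewise_constant f v -> Phi v = phi (v x0).

(* Coarser labellings have fewer fibrewise constant vertices. *)
Lemma represents_coarsen (X Y : Type) (f : L -> X) (g : L -> Y) (x0 : L) :
  refines f g -> represents f x0 -> represents g x0.
Proof.
move=> fg [phi [phiP Hphi]]; exists phi; split => // v vg.
by apply: Hphi => x y /fg /vg.
Qed.

(* A labelling is represented in at most one fibre: the vertex equal to b on
   the fibre of x and to a elsewhere would otherwise force phi a = phi b. *)
Lemma represents_unique (X : Type) (f : L -> X) (x y : L) :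
  represents f x -> represents f y -> f x = f y.
Proof.
move=> [phi [phiP Hx]] [psi [_ Hy]]; apply: contrapT => fxy.
pose va : L -> T := fun _ => a.
pose vb : L -> T := fun z => if pselect (f z = f x) then b else a.
have vaC : fibrewise_constant f va by [].
have vbC : fibrewise_constant f vb by move=> z w fzw; rewrite /vb fzw.
have vbx : vb x = b by rewrite /vb; case: pselect.
have vby : vb y = a by rewrite /vb; case: pselect => // fyx; case: fxy.
apply: (phiP a b eab).
have := Hx va vaC; have := Hy va vaC; have := Hx vb vbC; have := Hy vb vbC.
by rewrite vbx vby /va => -> -> -> ->.
Qed.

Lemma fibrewise_constant_factor (n : nat) (p : L -> 'I_n) (v : L -> T) :
  fibrewise_constant p v ->
  exists t : {ffun 'I_n -> T}, forall x, t (p x) = v x.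
Proof.
move=> vC.
exists [ffun j => if pselect (exists y, p y = j) is left h
                  then v (projT1 (cid h)) else a] => x.
rewrite ffunE; case: pselect => [h|[]]; last by exists x.
exact/vC/(projT2 (cid h)).
Qed.

Hypothesis tpc : trivially_power_colorable e k.

(* Existence for partitions indexed by ordinals: restrict Phi to the copy of
   G^n and use trivial power-colorability; the chosen coordinate is a
   nonempty piece, since otherwise phi would not separate a from b. *)
Lemma represents_exists_ord (n : nat) (p : L -> 'I_n) (x1 : L) :
  exists x0, represents p x0.
Proof.
have n_gt0 : (0 < n)%N by apply: leq_ltn_trans (leq0n _) (ltn_ord (p x1)).
pose embed (t : {ffun 'I_n -> T}) : L -> T := fun x => t (p x).
have embedP : proper_coloring (@power_adj T e n) (fun t => Phi (embed t)).
  by move=> t w tw; apply: Phi_proper => x; exact: tw.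
have [i [phi [phiP Hi]]] := tpc n_gt0 embedP.
have [x0 px0] : exists x0, p x0 = i.
  apply: contrapT => noi.
  pose ta : {ffun 'I_n -> T} := [ffun _ => a].
  pose tb : {ffun 'I_n -> T} := [ffun j => if j == i then b else a].
  have Eab : embed ta = embed tb.
    apply: funext => x; rewrite /embed !ffunE.
    by case: eqP => // pxi; case: noi; exists x.
  apply: (phiP a b eab).
  by have := Hi ta; have := Hi tb; rewrite Eab !ffunE eqxx => -> ->.
exists x0, phi; split => // v vC.
have [t tv] := fibrewise_constant_factor vC.
have -> : v = embed t by apply: funext => x; rewrite /embed tv.
by rewrite Hi /embed px0.
Qed.

Lemma represents_exists (X : finType) (f : L -> X) (x1 : L) :
  exists x0, represents f x0.
Proof.
have [x0 rep] := represents_exists_ord (fun x => enum_rank (f x)) x1.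
exists x0; apply: represents_coarsen rep.
by move=> x y /enum_rank_inj.
Qed.

Definition distinguished : set_system L :=
  [set A | exists (X : finType) (f : L -> X) (x0 : L),
     represents f x0 /\ A = fibre f x0].

Lemma distinguishedP (X : Type) (f : L -> X) (A : set L) (z0 : L) :
  represents f z0 -> saturated f A -> A z0 -> distinguished A.
Proof.
move=> rep sA Az0; exists bool, (indicator A), z0.
rewrite fibre_indicator //; split => //.
exact: represents_coarsen (refines_indicator sA) rep.
Qed.

Lemma distinguished_mem (X : Type) (f : L -> X) (A : set L) (z0 : L) :
  distinguished A -> represents f z0 -> saturated f A -> A z0.
Proof.
move=> [Y [g [x0 [repg ->]]]] repf sA.
have sg := @fibre_saturated L Y g x0.
have Ez : indicator (fibre g x0) z0 = indicator (fibre g x0) x0.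
  apply: represents_unique.
  - exact: represents_coarsen (refines_indicator sA) repf.
  - exact: represents_coarsen (refines_indicator sg) repg.
by move: Ez; rewrite /indicator (asboolT (erefl _ : fibre g x0 x0)) => /asboolP.
Qed.

Variable x1 : L.

Let pair_indicator (A B : set L) : L -> bool * bool :=
  fun x => (indicator A x, indicator B x).

Let pair_saturated_l (A B : set L) : saturated (pair_indicator A B) A.
Proof.
apply: saturated_refines (@indicator_saturated L A).
by move=> x y /(congr1 fst).
Qed.

Let pair_saturated_r (A B : set L) : saturated (pair_indicator A B) B.
Proof.
apply: saturated_refines (@indicator_saturated L B).
by move=> x y /(congr1 snd).
Qed.

Lemma distinguishedI (A B : set L) :
  distinguished A -> distinguished B -> distinguished (A `&` B).
Proof.
move=> dA dB; have [z0 rep] := represents_exists (pair_indicator A B) x1.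
have sA := @pair_saturated_l A B; have sB := @pair_saturated_r A B.
apply: (distinguishedP rep (saturatedI sA sB)).
by split; [exact: distinguished_mem rep sA|exact: distinguished_mem rep sB].
Qed.

Lemma distinguishedS (A B : set L) :
  A `<=` B -> distinguished A -> distinguished B.
Proof.
move=> AB dA; have [z0 rep] := represents_exists (pair_indicator A B) x1.
apply: (distinguishedP rep (@pair_saturated_r A B)).
exact/AB/(distinguished_mem dA rep (@pair_saturated_l A B)).
Qed.

Lemma distinguished_setVsetC (A : set L) :
  distinguished A \/ distinguished (~` A).
Proof.
have [z0 rep] := represents_exists (indicator A) x1.
have sA := @indicator_saturated L A.
have [Az0|nAz0] := pselect (A z0).
  by left; exact: distinguishedP rep sA Az0.
by right; exact: distinguishedP rep (saturatedC sA) nAz0.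
Qed.

Lemma distinguished_ultra : UltraFilter distinguished.
Proof.
apply: ultra_setVsetC; last exact: distinguished_setVsetC.
apply: Build_ProperFilter.
  by move=> [X [f [x0 [_ E]]]]; have : fibre f x0 x0 by []; rewrite -E.
split; [|exact: distinguishedI|exact: distinguishedS].
have [z0 rep] := represents_exists (fun _ : L => tt) x1.
exact: distinguishedP rep (fun _ _ _ _ => I) I.
Qed.

Lemma U_family_distinguished : U_family e Phi = distinguished.
Proof.
apply/funext => A; apply/propext; split.
  move=> [n [p [surj [i [phi [-> [phiP Hi]]]]]]].
  have [x0 px0] := surj i.
  exists 'I_n, p, x0; rewrite /fibre px0; split => //.
  by exists phi; split => // v vC; exact: Hi.
move=> [X [f [x0 [[phi [phiP Hf]] ->]]]].
have [n [p [surj pf]]] := finite_partition_of_labelling f x0.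
exists n, p; split => //; exists (p x0), phi; split.
  by apply/funext => x; apply/propext; rewrite /fibre /= pf.
split => // v vC x pxx0.
by rewrite -(vC x0 x) ?pxx0 // Hf // => y z /pf /vC.
Qed.

End Representation.

Theorem mainTheorem18 (T : finType) (e : rel T) (k : nat) (L : Type)
  (Phi : (L -> T) -> 'I_k) :
  simple_graph e ->
  (exists x y, e x y) ->
  is_chromatic_number e k ->
  trivially_power_colorable e k ->
  infinite_set [set: L] ->
  proper_coloring (@bigpower_adj T e L) Phi ->
  UltraFilter (U_family e Phi).
Proof.
move=> _ [a [b eab]] _ tpc infL PhiP.
have [x1 _] : [set: L] !=set0.
  by apply/set0P/eqP => L0; apply: infL; rewrite L0; exact: finite_set0.
rewrite U_family_distinguished.
exact: distinguished_ultra eab PhiP tpc x1.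
Qed.
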